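(* Let $x\in[n]$ be $a$-below, $c=T[x]$ and $i=\mathrm{bwt}(x)$. For every $c$-run break $j<i-a$ and every $j'\in\{j-1,j\}$ with $\mathrm{BWT}_r[j']=c$, $$\big|\mathrm{lcs}\big(T[\mathrm{text}(j')-\mathrm{LCP}_r[j],\mathrm{text}(j')],\,T[1,x]\big)\big|\le\big|\mathrm{lcs}\big(T[1,x],\,T[\mathrm{text}(i-a)-\mathrm{LCP}_r[i-a],\mathrm{text}(i-a)]\big)\big|.$$
   Context: Let $T=T[1,n]\in\Sigma^n$, $n\ge2$, over $\Sigma=\{1,\dots,\sigma\}$, with $T[1]=\$$ the smallest character, occurring only at position 1, and every character of $\Sigma$ occurring in $T$. $T[i,j]=T[i]\cdots T[j]$ (empty if $i>j$). Let $\overleftarrow T=T[n]\cdots T[1]$; $\mathrm{SA}_r$ is the suffix array of $\overleftarrow T$; $\mathrm{LCP}_r[1]=0$ and for $i\ge2$, $\mathrm{LCP}_r[i]$ is the length of the longest common prefix of the suffixes of $\overleftarrow T$ starting at $\mathrm{SA}_r[i-1]$ and $\mathrm{SA}_r[i]$; $\mathrm{BWT}_r[i]=\overleftarrow T[\mathrm{SA}_r[i]-1]$ if $\mathrm{SA}_r[i]>1$, else $\overleftarrow T[n]$. $\mathrm{text}(i)=n-\mathrm{SA}_r[i]+1$, $\mathrm{bwt}(x)=\mathrm{SA}_r^{-1}[n+1-x]$. $\mathrm{lcs}(\alpha,\beta)$ is the longest common suffix of strings $\alpha,\beta$ and $|\cdot|$ denotes length. For $i\in[2,n]$, $c\in\Sigma$,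 $i$ is a $c$-run break if $\mathrm{BWT}_r[i-1]\ne\mathrm{BWT}_r[i]$ and $c\in\{\mathrm{BWT}_r[i-1],\mathrm{BWT}_r[i]\}$. With $i=\mathrm{bwt}(x)$, $x$ is $a$-below if $a\in[0,i-2]$ and $\mathrm{BWT}_r[i-a-1]\ne\mathrm{BWT}_r[i-a]=\dots=\mathrm{BWT}_r[i]$. *)

(* Strings are [seq nat]; all positions are 1-indexed
   as in the paper. *)
From mathcomp Require Import all_boot.
Set Implicit Arguments. Unset Strict Implicit. Unset Printing Implicit Defensive.

Definition at1 (s : seq nat) (k : nat) : nat := nth 0 s k.-1.

Fixpoint lexle (s t : seq nat) : bool :=
  match s, t with
  | [::], _ => true
  | _ :: _, [::] => false
  | a :: s', b :: t' => (a < b) || ((a == b) && lexle s' t')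
  end.

Fixpoint lcp_len (s t : seq nat) : nat :=
  match s, t with
  | a :: s', b :: t' => if a == b then (lcp_len s' t').+1 else 0
  | _, _ => 0
  end.

Definition lcs_len (s t : seq nat) : nat := lcp_len (rev s) (rev t).

(* T[i,j] = T[i] ... T[j], empty if i > j (1-indexed) *)
Definition substr (T : seq nat) (i j : nat) : seq nat := take (j.+1 - i) (drop i.-1 T).

Definition sufr (T : seq nat) (p : nat) : seq nat := drop p.-1 (rev T).

Definition SAr_seq (T : seq nat) : seq nat :=
  sort (fun p q => lexle (sufr T p) (sufr T q)) (iota 1 (size T)).

Definition SAr (T : seq nat) (i : nat) : nat := nth 0 (SAr_seq T) i.-1.
Definition SAr_inv (T : seq nat) (p : nat) : nat := (index p (SAr_seq T)).+1.

Definition LCPr (T : seq nat) (i : nat) : nat :=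
  if i <= 1 then 0 else lcp_len (sufr T (SAr T i.-1)) (sufr T (SAr T i)).

Definition BWTr (T : seq nat) (i : nat) : nat :=
  if 1 < SAr T i then at1 (rev T) (SAr T i).-1 else at1 (rev T) (size T).

Definition text (T : seq nat) (i : nat) : nat := size T - SAr T i + 1.
Definition bwt (T : seq nat) (x : nat) : nat := SAr_inv T (size T + 1 - x).

Definition run_break (T : seq nat) (c j : nat) : Prop :=
  [/\ 2 <= j <= size T, BWTr T j.-1 != BWTr T j
    & (c == BWTr T j.-1) || (c == BWTr T j)].

Definition a_below (T : seq nat) (a x : nat) : Prop :=
  let i := bwt T x in
  [/\ a.+2 <= i, BWTr T (i - a - 1) != BWTr T (i - a)
    & forall k, i - a <= k <= i -> BWTr T k = BWTr T i].

(* standing assumptions on T over Sigma = {1..sigma}, with $ = 1 *)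
Definition valid_text (sigma : nat) (T : seq nat) : Prop :=
  [/\ 2 <= size T,
      all (fun c => 1 <= c <= sigma) T,
      at1 T 1 = 1,
      (forall k, 2 <= k <= size T -> at1 T k != 1)
    & (forall c, 1 <= c <= sigma -> c \in T)].

(* Reversal turns the longest common suffixes of prefixes of [T] into longest
   common prefixes of suffixes of the reversed text, and [T[1,x]] reversed is
   the suffix ranked [i = bwt(x)].  In a lexicographically sorted list the lcp
   of two entries is bounded by the lcp of any entry lying between them, so for
   [j' < i - a <= i] the lcp of the suffixes ranked [j'] and [i] is bounded both
   by [LCP_r[i-a]] and by the lcp of the suffixes ranked [i-a] and [i]. *)
From mathcomp Require Import all_boot zify.

Set Implicit Arguments.
Unset Strict Implicit.
Unset Printing Implicit Defensive.

Lemma lcp_lenC s t : lcp_len s t = lcp_len t s.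
Proof. by elim: s t => [|a s IH] [|b t] //=; rewrite [b == a]eq_sym IH. Qed.

Lemma lcp_len_take m s t : lcp_len (take m s) t = minn m (lcp_len s t).
Proof.
elim: s m t => [|a s IH] [|m] [|b t] //=; try lia.
by case: eqP => _ //; rewrite IH minnSS.
Qed.

Lemma lcp_len_leq_size s t : lcp_len s t <= size s.
Proof. by elim: s t => [|a s IH] [|b t] //=; case: eqP => // _; apply: IH. Qed.

Lemma nth_lt_lcp_len s t k : k < lcp_len s t -> nth 0 s k = nth 0 t k.
Proof.
elim: s t k => [|a s IH] [|b t] [|k] //=; case: eqP => // _; exact: IH.
Qed.

Lemma lexle_refl : reflexive lexle.
Proof. by elim => [|a s IH] //=; rewrite eqxx IH orbT. Qed.

Lemma lexle_total : total lexle.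
Proof. by elim => [|a s IH] [|b t] //=; case: (ltngtP a b) => //= ->; rewrite IH. Qed.

Lemma lexle_trans : transitive lexle.
Proof.
move=> v u w; elim: u v w => [|a u IH] [|b v] [|c w] //=.
case/orP => [ab|/andP[/eqP -> uv]]; case/orP => [bc|/andP[/eqP <- vw]].
- by rewrite (ltn_trans ab bc).
- by rewrite ab.
- by rewrite bc.
- by rewrite eqxx (IH _ _ uv vw) orbT.
Qed.

Lemma lcp_len_between u v w : lexle u v -> lexle v w ->
  lcp_len u w <= minn (lcp_len u v) (lcp_len v w).
Proof.
elim: u v w => [|a u IH] [|b v] [|c w] //=.
case/orP => [ab|/andP[/eqP <- uv]]; case/orP => [bc|/andP[/eqP <- vw]].
- by rewrite ltn_eqF ?(ltn_trans ab bc).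
- by rewrite ltn_eqF.
- by rewrite ltn_eqF.
- by rewrite eqxx minnSS ltnS IH.
Qed.

Lemma rev_substr T l t : 1 <= l <= t.+1 -> t <= size T ->
  rev (substr T l t) = take (t.+1 - l) (drop (size T - t) (rev T)).
Proof.
move=> /andP[l1 lt] tn.
rewrite /substr drop_rev take_rev size_take.
have -> : size T - (size T - t) = t by lia.
have -> : (if t < size T then t else size T) = t by case: ltnP; lia.
by rewrite take_drop; congr (rev (drop _ (take _ _))); lia.
Qed.

Lemma size_sufr T p : size (sufr T p) = size T - p.-1.
Proof. by rewrite /sufr size_drop size_rev. Qed.

Section SuffixArray.

Variable T : seq nat.

Definition sa_suffix (k : nat) : seq nat := sufr T (SAr T k).

Lemma perm_SAr_seq : perm_eq (SAr_seq T) (iota 1 (size T)).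
Proof. by rewrite /SAr_seq perm_sort. Qed.

Lemma size_SAr_seq : size (SAr_seq T) = size T.
Proof. by rewrite /SAr_seq size_sort size_iota. Qed.

Lemma SAr_bounds k : 1 <= k <= size T -> 1 <= SAr T k <= size T.
Proof.
move=> /andP[k1 kn].
have : SAr T k \in SAr_seq T by rewrite mem_nth // size_SAr_seq; lia.
by rewrite (perm_mem perm_SAr_seq) mem_iota; lia.
Qed.

Lemma SAr_inj k l : 1 <= k <= size T -> 1 <= l <= size T -> SAr T k = SAr T l -> k = l.
Proof.
move=> /andP[k1 kn] /andP[l1 ln] /eqP.
rewrite /SAr nth_uniq ?size_SAr_seq ?(perm_uniq perm_SAr_seq) ?iota_uniq; lia.
Qed.

Lemma sa_suffix_sorted k l : 1 <= k -> k <= l -> l <= size T ->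
  lexle (sa_suffix k) (sa_suffix l).
Proof.
move=> k1 kl ln.
have sorted_SA : sorted (fun p q => lexle (sufr T p) (sufr T q)) (SAr_seq T).
  by apply: sort_sorted => p q; apply: lexle_total.
apply: (sorted_leq_nth _ _ 0 sorted_SA); rewrite ?inE ?size_SAr_seq; try lia.
- by move=> p q r; apply: lexle_trans.
- by move=> p; apply: lexle_refl.
Qed.

Lemma LCPrE k : 2 <= k -> LCPr T k = lcp_len (sa_suffix k.-1) (sa_suffix k).
Proof. by move=> k2; rewrite /LCPr ifN //; lia. Qed.

Lemma lcp_sa_suffix_leq k l m : 1 <= k < l -> l <= m <= size T ->
  lcp_len (sa_suffix k) (sa_suffix m)
  <= minn (LCPr T l) (lcp_len (sa_suffix l) (sa_suffix m)).
Proof.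
move=> /andP[k1 kl] /andP[lm mn].
have sorted_kl := @sa_suffix_sorted k l.-1 k1 ltac:(lia) ltac:(lia).
have sorted_lm := @sa_suffix_sorted l.-1 m ltac:(lia) ltac:(lia) mn.
have sorted_l := @sa_suffix_sorted l.-1 l ltac:(lia) (leq_pred l) ltac:(lia).
have sorted_m := @sa_suffix_sorted l m ltac:(lia) lm mn.
rewrite LCPrE; last by lia.
apply: leq_trans _ (lcp_len_between sorted_l sorted_m).
exact: leq_trans (lcp_len_between sorted_kl sorted_lm) (geq_minr _ _).
Qed.

End SuffixArray.

Lemma lcp_sufr_lt_size sigma T p q : valid_text sigma T ->
  1 <= p <= size T -> 1 <= q <= size T -> p <> q ->
  lcp_len (sufr T p) (sufr T q) < size (sufr T p).
Proof.
move=> [_ _ T1 Tneq1 _] /andP[p1 pn] /andP[q1 qn] pq.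
rewrite ltn_neqAle lcp_len_leq_size andbT; apply/negP => /eqP E.
have := lcp_len_leq_size (sufr T q) (sufr T p).
rewrite lcp_lenC E !size_sufr => qp.
(* the full suffix at [p] ends with [$]; at the same offset the suffix at [q] reads [T[p-q+1] <> $] *)
have := @nth_lt_lcp_len (sufr T p) (sufr T q) (size T - p).
rewrite E size_sufr /sufr !nth_drop !nth_rev ?size_rev; try lia.
have -> : size T - (p.-1 + (size T - p)).+1 = 0 by lia.
have -> : size T - (q.-1 + (size T - p)).+1 = (p - q + 1).-1 by lia.
move=> /(_ ltac:(lia)) Teq.
by have := Tneq1 (p - q + 1) ltac:(lia); rewrite /at1 -Teq -/(at1 T 1) T1.
Qed.

Lemma LCPr_lt_text sigma T k k' : valid_text sigma T -> 2 <= k <= size T ->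
  (k' = k.-1 \/ k' = k) -> LCPr T k < text T k'.
Proof.
move=> V /andP[k2 kn] hk.
have r1 := @SAr_bounds T k.-1 ltac:(lia).
have r2 := @SAr_bounds T k ltac:(lia).
have ne : SAr T k.-1 <> SAr T k by move/SAr_inj; lia.
rewrite LCPrE // /sa_suffix /text.
case: hk => ->.
- by have := lcp_sufr_lt_size V r1 r2 ne; rewrite size_sufr; lia.
- by have := lcp_sufr_lt_size V r2 r1 (nesym ne); rewrite lcp_lenC size_sufr; lia.
Qed.

Lemma rev_substr_LCPr sigma T k k' : valid_text sigma T -> 2 <= k <= size T ->
  (k' = k.-1 \/ k' = k) ->
  rev (substr T (text T k' - LCPr T k) (text T k')) = take (LCPr T k).+1 (sa_suffix T k').
Proof.
move=> V kr hk.
have := LCPr_lt_text V kr hk.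
have : 1 <= SAr T k' <= size T by apply: SAr_bounds; case: hk => ->; lia.
rewrite /text => r L.
by rewrite rev_substr; try lia; rewrite /sa_suffix /sufr; congr (take _ (drop _ _)); lia.
Qed.

Lemma bwt_bounds T x : 1 <= x <= size T -> 1 <= bwt T x <= size T.
Proof.
move=> xr; have : size T + 1 - x \in SAr_seq T.
  by rewrite (perm_mem (perm_SAr_seq T)) mem_iota; lia.
by rewrite -index_mem size_SAr_seq /bwt /SAr_inv; lia.
Qed.

Lemma rev_prefix_bwt T x : 1 <= x <= size T ->
  rev (substr T 1 x) = sa_suffix T (bwt T x).
Proof.
move=> xr.
have SAi : SAr T (bwt T x) = size T + 1 - x.
  by rewrite /SAr /bwt /SAr_inv /= nth_index // (perm_mem (perm_SAr_seq T)) mem_iota; lia.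
rewrite rev_substr ?take_oversize ?size_drop ?size_rev; try lia.
by rewrite /sa_suffix SAi /sufr; congr drop; lia.
Qed.

Theorem mainTheorem5 (sigma : nat) (T : seq nat) (a x : nat) :
  valid_text sigma T ->
  1 <= x <= size T ->
  a_below T a x ->
  let c := at1 T x in
  let i := bwt T x in
  forall j j' : nat,
    run_break T c j -> j < i - a ->
    (j' = j.-1 \/ j' = j) -> BWTr T j' = c ->
    lcs_len (substr T (text T j' - LCPr T j) (text T j')) (substr T 1 x)
    <= lcs_len (substr T 1 x)
               (substr T (text T (i - a) - LCPr T (i - a)) (text T (i - a))).
Proof.
move=> V xr [ai _ _] c i j j' [jr _ _] ji hj' _.
have iN : i <= size T by have := bwt_bounds xr; lia.
have key : lcp_len (sa_suffix T j') (sa_suffix T i)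
            <= minn (LCPr T (i - a)) (lcp_len (sa_suffix T (i - a)) (sa_suffix T i)).
  by apply: lcp_sa_suffix_leq; case: hj' => E; lia.
rewrite /lcs_len rev_prefix_bwt // -/i (rev_substr_LCPr V jr hj').
rewrite (rev_substr_LCPr V (_ : 2 <= i - a <= size T) (or_intror erefl)); last by lia.
rewrite lcp_len_take [X in _ <= X]lcp_lenC lcp_len_take.
lia.
Qed.
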